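(* Let $K$ be a connected 4-regular simple graph with an odd number of vertices, let $v,w$ be adjacent vertices of $K$ having exactly one common neighbour $c$, let the neighbours of $w$ be $v,a,b,c$ and the neighbours of $v$ be $w,c,d,e$, and let $S=K-\{v,w\}$. Let $\sigma$ be a bipartition of the edges of $S$ such that each part is the edge set of a spanning forest of $S$ (possibly with a single tree) in which every tree contains at least one of $a,b,d,e$. Then of the two edges of $S$ incident to $c$ exactly one lies in each part of $\sigma$, and swapping which parts these two edges are in yields a new bipartition $\sigma'$ of $E(S)$ which again has the property that each part is the edge set of a spanning forest of $S$ in which every tree contains at least one of $a,b,d,e$ (though the vertices need not be distributed among the trees in the same way).
   Context: $K-\{v,w\}$ denotes $K$ with $v$, $w$ and their incident edges removed; in $S$ the vertex $c$ has degree 2. *)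

From mathcomp Require Import all_boot.
Set Implicit Arguments. Unset Strict Implicit. Unset Printing Implicit Defensive.

(* Graphs: vertex type T : finType, adjacency adj : rel T (assumed symmetric,
   irreflexive in the theorem).  Edges are represented as 2-element sets
   {x, y} : {set T}. *)

Definition edges_del (T : finType) (adj : rel T) (D : {set T}) : {set {set T}} :=
  [set [set x; y] | x in ~: D, y in ~: D & adj x y].

Definition rel_of (T : finType) (F : {set {set T}}) : rel T :=
  fun x y => (x != y) && ([set x; y] \in F).

Definition has_cycle (T : finType) (F : {set {set T}}) : Prop :=
  exists s : seq T, [/\ uniq s, 3 <= size s & cycle (rel_of F) s].

Definition rooted_spanning_forest (T : finType) (V : {set T})
    (F : {set {set T}}) (R : {set T}) : Prop :=
  [/\ forall f, f \in F -> f \subset V,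
      ~ has_cycle F
    & forall x, x \in V -> exists2 r, r \in R & connect (rel_of F) x r].

(* A leaf c of a forest can be re-hung on any other neighbour without creating a
   cycle (a cycle through c would need two distinct neighbours of c) and without
   disconnecting anything (no path between two other vertices needs to pass
   through a leaf).  In S the vertex c has only two edges, since v and w are
   among its four neighbours in K; as c is not a root, each of the two forests
   must use one of them, so c is a leaf of both and the swap just re-hangs it. *)

From mathcomp Require Import all_boot.
From mathcomp Require Import zify.
Set Implicit Arguments. Unset Strict Implicit.

Definition edges_at (T : finType) (F : {set {set T}}) (c : T) : {set {set T}} :=
  [set f in F | c \in f].

Section Edges.

Variable T : finType.
Implicit Types (E F : {set {set T}}) (c x y : T).

Lemma set2_injr c x y : c != y -> [set c; y] = [set c; x] -> y = x.
Proof.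
move=> cy exy; have /set2P[yc|//] : y \in [set c; x] by rewrite -exy set22.
by rewrite yc eqxx in cy.
Qed.

Lemma rel_of_sym F : symmetric (rel_of F).
Proof. by move=> x y; rewrite /rel_of eq_sym setUC. Qed.

Lemma rel_of_pendant F c x y :
  edges_at F c \subset [set [set c; x]] -> rel_of F c y -> y = x.
Proof.
move=> pend /andP[cy Fcy]; apply: set2_injr cy _; apply/set1P.
by apply: (subsetP pend); rewrite inE Fcy set21.
Qed.

Lemma edges_atU E1 E2 c :
  edges_at (E1 :|: E2) c = edges_at E1 c :|: edges_at E2 c.
Proof. by apply/setP => f; rewrite !inE andb_orl. Qed.

Lemma card_edges_at_disjoint E1 E2 c : E1 :&: E2 = set0 ->
  #|edges_at (E1 :|: E2) c| = #|edges_at E1 c| + #|edges_at E2 c|.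
Proof.
move=> E12; rewrite edges_atU cardsU.
suff -> : edges_at E1 c :&: edges_at E2 c = set0 by rewrite cards0 subn0.
apply/setP => f; move/setP/(_ f): E12.
by rewrite !inE andbACA => ->.
Qed.

Lemma card1_set1 (A : {set {set T}}) f : #|A| = 1 -> f \in A -> A = [set f].
Proof. by move/eqP/cards1P=> [g ->] /set1P ->. Qed.

End Edges.

Lemma pendant_notin_cycle (T : finType) (F : {set {set T}}) (c x : T) (s : seq T) :
  edges_at F c \subset [set [set c; x]] ->
  uniq s -> 3 <= size s -> cycle (rel_of F) s -> c \notin s.
Proof.
move=> pend us ss cs; apply/negP => /rot_to[i s' def_s].
move: (rot_uniq i s) (size_rot i s) (rot_cycle i (rel_of F) s).
rewrite us cs def_s; case: s' {def_s} => [|y [|z t]] uq sz cyc; rewrite -sz in ss => //.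
move: cyc; rewrite /= rcons_path => /and4P[Fcy _ _ Flc].
have yx := rel_of_pendant pend Fcy.
have lx : last z t = x by apply: rel_of_pendant pend _; rewrite rel_of_sym.
move: uq; rewrite 2!cons_uniq => /and3P[_ ynt _].
by move: (mem_last z t); rewrite lx -yx (negbTE ynt).
Qed.

Lemma connect_homo (T : finType) (e e' : rel T) (g : T -> T) :
  (forall y z, e y z -> connect e' (g y) (g z)) ->
  forall x y, connect e x y -> connect e' (g x) (g y).
Proof.
move=> homo_g x y /connectP[p]; elim: p x => [|z p IHp] x /=; first by move=> _ ->.
by case/andP=> /homo_g exz /IHp/[apply]; apply: connect_trans.
Qed.

Section PendantSwap.

Variables (T : finType) (V R : {set T}) (E : {set {set T}}) (c x1 x2 : T).
Hypotheses (forestE : rooted_spanning_forest V E R) (cR : c \notin R).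
Hypotheses (cx1 : c != x1) (cx2 : c != x2) (cx2V : [set c; x2] \subset V).
Hypothesis pendE : edges_at E c \subset [set [set c; x1]].

Let F := (E :\ [set c; x1]) :|: [set [set c; x2]].

Lemma pendant_swap : edges_at F c \subset [set [set c; x2]].
Proof.
apply/subsetP => g; rewrite 3!inE => /andP[/orP[/andP[gx1 gE] cg|//]].
have /(subsetP pendE)/set1P gx1' : g \in edges_at E c by rewrite inE gE cg.
by move: gx1; rewrite gx1' !inE eqxx.
Qed.

Lemma mem_swap_avoid (g : {set T}) : c \notin g -> (g \in F) = (g \in E).
Proof.
move=> cg; have neq y : (g == [set c; y]) = false.
  by apply: contraNF cg => /eqP ->; rewrite set21.
by rewrite !inE (neq x1) (neq x2) orbF.
Qed.

Lemma rel_of_swap_avoid y z : y != c -> z != c -> rel_of F y z = rel_of E y z.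
Proof.
by move=> yc zc; rewrite /rel_of mem_swap_avoid // !inE negb_or !(eq_sym c) yc zc.
Qed.

Lemma swap_acyclic : ~ has_cycle F.
Proof.
case: forestE => _ acycE _ [s [us ss cs]]; apply: acycE; exists s; split => //.
have cs' := pendant_notin_cycle pendant_swap us ss cs.
apply: (sub_in_cycle (P := [pred z | z != c])) cs.
  by move=> y z /= yc zc; rewrite rel_of_swap_avoid.
by apply/allP => z zs /=; apply: contraNneq cs' => <-.
Qed.

Lemma swap_rooted_neq x : x \in V -> x != c ->
  exists2 r, r \in R & connect (rel_of F) x r.
Proof.
move=> xV xc; case: forestE => _ _ /(_ x xV)[r rR Exr]; exists r => //.
have rc : r != c by apply: contraNneq cR => <-.
pose g z := if z == c then x1 else z.
have gx : g x = x by rewrite /g (negbTE xc).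
have gr : g r = r by rewrite /g (negbTE rc).
rewrite -gx -gr; apply: (connect_homo (e := rel_of E)) Exr => y z Eyz.
rewrite /g; case: (eqVneq y c) => [yc|yc].
  by rewrite yc in Eyz; rewrite (rel_of_pendant pendE Eyz) eq_sym (negbTE cx1).
case: (eqVneq z c) => [zc|zc].
  by rewrite zc rel_of_sym in Eyz; rewrite (rel_of_pendant pendE Eyz).
by apply: connect1; rewrite rel_of_swap_avoid.
Qed.

Lemma rooted_spanning_forest_swap : rooted_spanning_forest V F R.
Proof.
split.
- move=> g; rewrite !inE => /orP[/andP[_ gE]|/eqP -> //].
  by case: forestE => subE _ _; apply: subE.
- exact: swap_acyclic.
move=> x xV; case: (eqVneq x c) => [->|xc]; last exact: swap_rooted_neq.
have x2V : x2 \in V by apply: (subsetP cx2V); rewrite set22.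
have x2c : x2 != c by rewrite eq_sym.
have [r rR Fx2r] := swap_rooted_neq x2V x2c.
exists r => //; apply: connect_trans Fx2r; apply: connect1.
by rewrite /rel_of cx2 !inE eqxx orbT.
Qed.

End PendantSwap.

Lemma uniq_of_card_set4 (T : finType) (x1 x2 x3 x4 : T) :
  #|[set x1; x2; x3; x4]| = 4 -> uniq [:: x1; x2; x3; x4].
Proof.
move=> card4; apply/card_uniqP; rewrite [size _]/= -card4; apply: eq_card => z.
by rewrite !inE !orbA.
Qed.

Lemma rooted_spanning_forest_edges_at (T : finType) (V R : {set T})
    (E : {set {set T}}) (c : T) :
  rooted_spanning_forest V E R -> c \in V -> c \notin R -> 0 < #|edges_at E c|.
Proof.
case=> _ _ rootedE cV cR; have [r rR /connectP[[|y p] /= cp lp]] := rootedE c cV.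
  by rewrite -lp rR in cR.
case/andP: cp => /andP[_ Ecy] _; apply/card_gt0P; exists [set c; y].
by rewrite inE Ecy set21.
Qed.

Lemma rooted_spanning_forests_edges_at (T : finType) (V R : {set T})
    (E1 E2 : {set {set T}}) (c : T) :
  rooted_spanning_forest V E1 R -> rooted_spanning_forest V E2 R ->
  c \in V -> c \notin R -> E1 :&: E2 = set0 ->
  #|edges_at (E1 :|: E2) c| <= 2 ->
  #|edges_at E1 c| = 1 /\ #|edges_at E2 c| = 1.
Proof.
move=> forest1 forest2 cV cR E12; rewrite card_edges_at_disjoint // => le2.
have := rooted_spanning_forest_edges_at forest1 cV cR.
have := rooted_spanning_forest_edges_at forest2 cV cR.
by lia.
Qed.

Section DeletedGraph.

Variables (T : finType) (adj : rel T) (D : {set T}).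
Hypotheses (adj_sym : symmetric adj) (adj_irr : irreflexive adj).

Lemma adj_neq x y : adj x y -> x != y.
Proof. by apply: contraTneq => ->; rewrite adj_irr. Qed.

Lemma edges_del_at c f : f \in edges_del adj D -> c \in f ->
  exists2 y, f = [set c; y] & [/\ c != y, adj c y & y \notin D].
Proof.
case/imset2P=> x y; rewrite !inE => xD /andP[yD xy] -> /set2P[|] ->.
  by exists y; split => //; apply: adj_neq.
by exists x; rewrite 1?setUC // adj_sym; split => //; apply: adj_neq; rewrite adj_sym.
Qed.

Lemma card_edges_at_del c : D \subset [set y | adj c y] ->
  #|edges_at (edges_del adj D) c| <= #|[set y | adj c y]| - #|D|.
Proof.
move=> DN; rewrite -{2}(setIidPr DN) -cardsD.
apply: leq_trans (leq_imset_card (fun y => [set c; y]) _); apply: subset_leq_card.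
apply/subsetP => f; rewrite inE => /andP[Sf cf].
have [y -> [_ cy yD]] := edges_del_at Sf cf.
by apply: imset_f; rewrite !inE cy yD.
Qed.

Lemma rooted_spanning_forest_exchange (V R : {set T}) (E : {set {set T}}) c f1 f2 :
  E \subset edges_del adj D -> rooted_spanning_forest V E R -> c \notin R ->
  #|edges_at E c| = 1 -> f1 \in E -> c \in f1 ->
  f2 \in edges_del adj D -> f2 \subset V -> c \in f2 ->
  rooted_spanning_forest V ((E :\ f1) :|: [set f2]) R.
Proof.
move=> ES forestE cR C1 Ef1 cf1 Sf2 f2V cf2.
have pendE : edges_at E c \subset [set f1].
  by rewrite (card1_set1 (f := f1) C1) // inE Ef1.
have [x1 def_f1 [cx1 _ _]] := edges_del_at (subsetP ES _ Ef1) cf1.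
have [x2 def_f2 [cx2 _ _]] := edges_del_at Sf2 cf2.
rewrite def_f1 def_f2 in pendE f2V *.
exact: rooted_spanning_forest_swap forestE cR cx1 cx2 f2V pendE.
Qed.

End DeletedGraph.

Theorem lemma4p1 (T : finType) (adj : rel T)
  (v w a b c d e : T)
  (E1 E2 : {set {set T}}) :
  symmetric adj ->
  irreflexive adj ->
  (forall x, #|[set y | adj x y]| = 4) ->
  (forall x y, connect adj x y) ->
  odd #|T| ->
  adj v w ->
  [set y | adj v y && adj w y] = [set c] ->
  [set y | adj w y] = [set v; a; b; c] ->
  [set y | adj v y] = [set w; c; d; e] ->
  (* sigma = (E1, E2) is a bipartition of E(S), S = K - {v,w} *)
  E1 :|: E2 = edges_del adj [set v; w] ->
  E1 :&: E2 = set0 ->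
  rooted_spanning_forest (~: [set v; w]) E1 [set a; b; d; e] ->
  rooted_spanning_forest (~: [set v; w]) E2 [set a; b; d; e] ->
  (#|[set f in E1 | c \in f]| = 1 /\ #|[set f in E2 | c \in f]| = 1) /\
  (forall f1 f2, f1 \in E1 -> c \in f1 -> f2 \in E2 -> c \in f2 ->
     rooted_spanning_forest (~: [set v; w]) ((E1 :\ f1) :|: [set f2])
       [set a; b; d; e] /\
     rooted_spanning_forest (~: [set v; w]) ((E2 :\ f2) :|: [set f1])
       [set a; b; d; e]).
Proof.
move=> adj_sym adj_irr deg _ _ vw Nvw Nw Nv E12 E1E2 forest1 forest2.
have /setP/(_ c) := Nvw; rewrite !inE eqxx => /andP[vc wc].
have := deg w; rewrite Nw => /uniq_of_card_set4 /=; rewrite !inE.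
case/and4P=> _ /norP[_ ac] bc _.
have := deg v; rewrite Nv => /uniq_of_card_set4 /=; rewrite !inE.
case/and4P=> _ /norP[cd ce] _ _.
have cR : c \notin [set a; b; d; e].
  by rewrite !inE !negb_or cd ce andbT !(eq_sym c) ac bc.
have cV : c \in ~: [set v; w].
  by rewrite !inE negb_or !(eq_sym c) (adj_neq adj_irr vc) (adj_neq adj_irr wc).
have card_c : #|edges_at (E1 :|: E2) c| <= 2.
  have vwN : [set v; w] \subset [set y | adj c y].
    by apply/subsetP => y /set2P[] ->; rewrite inE adj_sym.
  rewrite E12; apply: leq_trans (card_edges_at_del adj_sym adj_irr vwN) _.
  by rewrite deg cards2 (adj_neq adj_irr vw).
have [C1 C2] := rooted_spanning_forests_edges_at forest1 forest2 cV cR E1E2 card_c.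
have [ES1 ES2] :
    E1 \subset edges_del adj [set v; w] /\ E2 \subset edges_del adj [set v; w].
  by rewrite -E12 subsetUl subsetUr.
split=> // f1 f2 E1f1 cf1 E2f2 cf2.
have [[f1V _ _] [f2V _ _]] := (forest1, forest2).
split.
  exact: (rooted_spanning_forest_exchange adj_sym adj_irr ES1 forest1 cR C1 E1f1 cf1
    (subsetP ES2 _ E2f2) (f2V _ E2f2) cf2).
exact: (rooted_spanning_forest_exchange adj_sym adj_irr ES2 forest2 cR C2 E2f2 cf2
  (subsetP ES1 _ E1f1) (f1V _ E1f1) cf1).
Qed.
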